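(* Let $\Sigma$ be an $n\times n$ positive definite matrix and $\Omega=\Sigma^{-1}$. Suppose there is $\alpha\neq 0$ such that $\Sigma_{i,n-1}=\alpha\,\Sigma_{i,n}$ for all $i\neq n-1$. Then in the conditional independence structure of $\Sigma$, node $n-1$ is a leaf connected to node $n$; that is, $\Omega_{n-1,i}=0$ for all $i\notin\{n-1,n\}$ and $\Omega_{n-1,n}\neq 0$.
   Context: The conditional independence structure of a positive definite $\Sigma$ is the graph on $\{1,\dots,n\}$ with an edge $\{i,j\}$ ($i\neq j$) iff $(\Sigma^{-1})_{ij}\neq 0$. *)

From mathcomp Require Import all_boot all_order all_algebra.
Set Implicit Arguments. Unset Strict Implicit. Unset Printing Implicit Defensive.
Import Order.TTheory GRing.Theory Num.Theory.
Local Open Scope ring_scope.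

Definition posdef (R : realFieldType) (n : nat) (S : 'M[R]_n) : Prop :=
  S^T = S /\ forall x : 'cV[R]_n, x != 0 -> 0 < (x^T *m S *m x) 0 0.

Definition ci_edge (R : realFieldType) (n : nat) (S : 'M[R]_n) (i j : 'I_n) : Prop :=
  i != j /\ invmx S i j != 0.

From mathcomp Require Import all_boot all_order all_algebra.
Import Order.TTheory GRing.Theory Num.Theory.
Local Open Scope ring_scope.

(* With u := e_(n-1) - alpha e_n, symmetry and the column proportionality make
   u Sigma a multiple c e_(n-1) of a unit vector.  Hence u = c Omega_(n-1,.),
   so c <> 0 as u <> 0, and row n-1 of Omega is u / c, supported on {n-1, n}. *)

Lemma posdef_unitmx {R : realFieldType} {n : nat} {S : 'M[R]_n} :
  posdef S -> S \in unitmx.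
Proof.
case=> _ pos; rewrite unitmxE unitfE; apply/negP => /det0P [v v_neq0 vS0].
have := pos v^T; rewrite trmx_eq0 v_neq0 trmxK vS0 mul0mx mxE ltxx.
by move/(_ isT).
Qed.

Lemma proportional_cols_mulmx {R : comPzRingType} {n : nat} {S : 'M[R]_n}
    {k l : 'I_n} {alpha : R} :
  S^T = S -> (forall i, i != k -> S i k = alpha * S i l) ->
  (delta_mx 0 k - alpha *: delta_mx 0 l : 'rV_n) *m S
    = (S k k - alpha * S l k) *: delta_mx 0 k.
Proof.
move=> /matrixP symS propS.
rewrite mulmxBl -scalemxAl -!rowE; apply/matrixP => i j; rewrite !mxE (ord1 i) /=.
have [-> | j_neq_k] := eqVneq j k; first by rewrite /= mulr1.
by rewrite -symS -(symS l) !mxE propS // subrr mulr0.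
Qed.

Lemma row_invmx_scale {R : comUnitRingType} {n : nat} {S : 'M[R]_n}
    {u : 'rV[R]_n} {c : R} {k : 'I_n} :
  S \in unitmx -> u *m S = c *: delta_mx 0 k -> u = c *: row k (invmx S).
Proof. by move=> S_unit uS; rewrite -(mulmxK S_unit u) uS -scalemxAl rowE. Qed.

Theorem lemma1 (R : realFieldType) (m : nat) (S : 'M[R]_m.+2) (alpha : R) :
  posdef S -> alpha != 0 ->
  (forall i : 'I_m.+2, i != inord m -> S i (inord m) = alpha * S i ord_max) ->
  (forall i : 'I_m.+2, i != inord m -> i != ord_max -> invmx S (inord m) i = 0)
  /\ invmx S (inord m) ord_max != 0.
Proof.
move=> pd alpha_neq0 propS.
set k : 'I_m.+2 := inord m; set l : 'I_m.+2 := ord_max.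
have k_neq_l : k != l by rewrite -val_eqE /= inordK // neq_ltn ltnSn.
set u : 'rV_m.+2 := delta_mx 0 k - alpha *: delta_mx 0 l.
set c := S k k - alpha * S l k.
have uE : u = c *: row k (invmx S).
  exact: row_invmx_scale (posdef_unitmx pd) (proportional_cols_mulmx (proj1 pd) propS).
have uP i : u 0 i = (i == k)%:R - alpha * (i == l)%:R by rewrite !mxE eqxx.
have c_neq0 : c != 0.
  apply: contra_eq_neq (uP k) => c0.
  by rewrite uE c0 scale0r mxE eqxx (negbTE k_neq_l) mulr0 subr0 eq_sym oner_eq0.
have invE i : invmx S k i = c^-1 * u 0 i by rewrite uE !mxE mulKf.
split=> [i i_neq_k i_neq_l | ].
  by rewrite invE uP (negbTE i_neq_k) (negbTE i_neq_l) mulr0 subr0 mulr0.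
rewrite invE uP [l == k]eq_sym (negbTE k_neq_l) eqxx mulr1 sub0r.
by rewrite mulf_neq0 ?invr_eq0 ?oppr_eq0.
Qed.
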